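(* Assume $\mathbb P(T(X)>1-\alpha)>0$, that the law of $X$ is non-atomic, that for every $C\in\mathcal I$ the random variable $p_C(X)$ has a continuous, non-atomic distribution, and that for every distinct $C_1,C_2\in\mathcal I$ any nontrivial linear combination of $p_{C_1}(X)$ and $p_{C_2}(X)$ has a non-atomic distribution. Then: (1) $\mu^*=\min\{\mu\ge 0: G(D^\mu,C^\mu)\le 0\}$ exists and is finite; (2) $(D^{\mu^*},C^{\mu^*})$ is an optimal solution of the problem of maximizing $\Pi(D,C)$ over all $D:\mathcal X\to\{0,1\}$, $C:\mathcal X\to\mathcal I$ subject to $G(D,C)\le 0$.
   Context: Let $(X,Y)\sim P_{XY}$ on $\mathcal X\times\mathcal Y$, $\alpha\in(0,1)$. $\mathcal I$ is a finite collection of subsets of $\mathcal Y$ enumerated in a fixed lexicographic order, and $w:\mathcal I\to(0,B)$ is a bounded positive weight. For $x\in\mathcal X$, $C\in\mathcal I$ write $p_C(x)=\mathbb P(Y\in C\mid X=x)$, and for $\mu\ge0$ let $\ell_{x,C}(\mu)=w(C)p_C(x)+\mu(p_C(x)-(1-\alpha))$ and $\mathcal U_x(\mu)=\max_{C\in\mathcal I}\ell_{x,C}(\mu)$. $C^\mu(x)$ is a maximizer of $\ell_{x,C}(\mu)$ over $C\in\mathcal I$, ties broken in favor of the largest $w(C)$ and then the smallest index in the ordering; $D^\mu(x)=\mathbb 1\{\mathcal U_x(\mu)\ge 0\}$. $T(x)=\max_{C\in\mathcal I}p_C(x)$. For $D:\mathcal X\to\{0,1\}$, $C:\mathcal X\to\mathcal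 I$: $\Pi(D,C)=\mathbb E[w(C(X))p_{C(X)}(X)D(X)]$ and $G(D,C)=\mathbb E[(1-p_{C(X)}(X)-\alpha)D(X)]$. *)

From HB Require Import structures.
From mathcomp Require Import all_boot all_order all_algebra.
From mathcomp Require Import all_classical all_reals all_analysis.
Set Implicit Arguments. Unset Strict Implicit. Unset Printing Implicit Defensive.
Import Order.TTheory GRing.Theory Num.Theory.
Local Open Scope classical_set_scope.
Local Open Scope ring_scope.

Section Defs.
Context {R : realType} {dX dY : measure_display}
  {X : measurableType dX} {Y : measurableType dY}.

(* p_C(x) = P(Y in C | X = x), realised through a probability kernel k
   (a regular conditional distribution of Y given X). *)
Definition pC (k : R.-pker X ~> Y) (C : set Y) (x : X) : R := fine (k x C).

(* The collection I = {Is i | i : 'I_n.+1}, enumerated by the index order. *)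
Definition ell n (k : R.-pker X ~> Y) (Is : 'I_n.+1 -> set Y)
  (w : 'I_n.+1 -> R) (alpha : R) (x : X) (i : 'I_n.+1) (mu : R) : R :=
  w i * pC k (Is i) x + mu * (pC k (Is i) x - (1 - alpha)).

Definition Ux n k Is w alpha (x : X) (mu : R) : R :=
  \big[Num.max/@ell n k Is w alpha x ord0 mu]_(i < n.+1) ell k Is w alpha x i mu.

Definition is_maximizer n k Is w alpha (x : X) (mu : R) (i : 'I_n.+1) : bool :=
  [forall j, @ell n k Is w alpha x j mu <= ell k Is w alpha x i mu].

Definition Cmu n k Is w alpha (mu : R) (x : X) : 'I_n.+1 :=
  odflt ord0 [pick i | [&& @is_maximizer n k Is w alpha x mu i,
     [forall j, is_maximizer k Is w alpha x mu j ==> (w j <= w i)] &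
     [forall j, (is_maximizer k Is w alpha x mu j && (w j == w i))
                  ==> (i <= j)%N]]].

Definition Dmu n k Is w alpha (mu : R) (x : X) : bool :=
  0 <= @Ux n k Is w alpha x mu.

Definition Tmax n (k : R.-pker X ~> Y) (Is : 'I_n.+1 -> set Y) (x : X) : R :=
  \big[Num.max/pC k (Is ord0) x]_(i < n.+1) pC k (Is i) x.

Definition Pi n (PX : probability X R) (k : R.-pker X ~> Y)
  (Is : 'I_n.+1 -> set Y) (w : 'I_n.+1 -> R)
  (D : X -> bool) (C : X -> 'I_n.+1) : \bar R :=
  (\int[PX]_x (w (C x) * pC k (Is (C x)) x * (D x)%:R)%:E)%E.

Definition G n (PX : probability X R) (k : R.-pker X ~> Y)
  (Is : 'I_n.+1 -> set Y) (alpha : R)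
  (D : X -> bool) (C : X -> 'I_n.+1) : \bar R :=
  (\int[PX]_x ((1 - pC k (Is (C x)) x - alpha) * (D x)%:R)%:E)%E.

Definition measurable_rule n (D : X -> bool) (C : X -> 'I_n.+1) : Prop :=
  measurable (D @^-1` [set true]) /\ forall i, measurable (C @^-1` [set i]).

Definition nonatomic (mu : set X -> \bar R) : Prop :=
  forall A, measurable A -> (0 < mu A)%E ->
    exists B, [/\ measurable B, B `<=` A & (0 < mu B < mu A)%E].

End Defs.

From Pilot Require Import Defs.
From HB Require Import structures.
From mathcomp Require Import all_boot all_order all_algebra.
From mathcomp Require Import all_classical all_reals all_analysis.
From mathcomp Require Import measurable_realfun.
From mathcomp Require Import ring lra.
Import Order.TTheory GRing.Theory Num.Theory numFieldNormedType.Exports.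
Local Open Scope classical_set_scope.
Local Open Scope ring_scope.

(* For a multiplier mu >= 0 the rule (D^mu, C^mu) maximizes pointwise the
   Lagrangian integrand w(C) p_C D - mu (1 - p_C - alpha) D = ell_{x,C}(mu) D,
   hence maximizes Pi - mu G over all rules; if moreover mu G(D^mu, C^mu) = 0 it
   is optimal among feasible rules.  The genericity hypotheses on the p_C(X) make
   the values ell_{x,C}(mu0) pairwise distinct and nonzero for almost every x, so
   D^mu(x) and C^mu(x) are locally constant near mu0, and dominated convergence
   makes mu |-> G(D^mu, C^mu) continuous on [0, +oo).  As mu -> +oo it tends to
   E[min(0, 1 - alpha - T(X))] < 0.  So the feasible multipliers form a nonempty
   closed subset of [0, +oo), with a minimum m; if m > 0 then G > 0 on [0, m),
   so G(D^m, C^m) = 0 by continuity: complementary slackness holds at m. *)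

Section FiniteMax.
Context {R : realType} {m : nat}.

Lemma bigmax_argmax (F : 'I_m.+1 -> R) :
  exists2 i, \big[Num.max/F ord0]_(j < m.+1) F j = F i & forall j, F j <= F i.
Proof.
case: (@arg_maxP _ _ _ ord0 xpredT F isT) => i _ Fi_max.
exists i => [|j]; last exact: Fi_max.
apply/le_anti; rewrite le_bigmax andbT.
by apply: bigmax_le => [|j _]; exact: Fi_max.
Qed.

Lemma exists_lex_max (M : pred 'I_m.+1) (w : 'I_m.+1 -> R) :
  (exists i, M i) -> exists i, [&& M i, [forall j, M j ==> (w j <= w i)] &
     [forall j, (M j && (w j == w i)) ==> (i <= j)%N]].
Proof.
case=> i0 Mi0; case: (@arg_maxP _ _ _ i0 M w Mi0) => i1 Mi1 i1_max.
have Mi1w : M i1 && (w i1 == w i1) by rewrite Mi1 eqxx.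
case: (@arg_minnP _ i1 (fun j => M j && (w j == w i1)) val Mi1w).
move=> i /andP[Mi /eqP wi] i_min; exists i; apply/and3P; split => //.
- by apply/forallP => j; apply/implyP => Mj; rewrite wi; exact: i1_max.
- apply/forallP => j; apply/implyP => /andP[Mj wj]; apply: i_min.
  by rewrite Mj -wi.
Qed.

End FiniteMax.

Section MeasurableFinite.
Context {d : measure_display} {X : measurableType d} {R : realType}.

Lemma measurable_set_ler (f g : X -> R) :
  measurable_fun setT f -> measurable_fun setT g -> measurable [set x | f x <= g x].
Proof.
move=> mf mg; rewrite -[X in measurable X]setTI.
by apply: (measurable_fun_ler mf mg measurableT).
Qed.

Lemma measurable_set_ltr (f g : X -> R) :
  measurable_fun setT f -> measurable_fun setT g -> measurable [set x | f x < g x].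
Proof.
move=> mf mg; rewrite -[X in measurable X]setTI.
by apply: (measurable_fun_ltr mf mg measurableT).
Qed.

Lemma measurable_set_eqr (f : X -> R) t :
  measurable_fun setT f -> measurable [set x | f x = t].
Proof.
move=> mf; rewrite -[X in measurable X]setTI.
exact: (mf measurableT [set t] (measurable_set1 t)).
Qed.

Lemma measurable_bigmaxr (I : Type) (r : seq I) (f0 : X -> R) (F : I -> X -> R) :
  measurable_fun setT f0 -> (forall i, measurable_fun setT (F i)) ->
  measurable_fun setT (fun x => \big[Num.max/f0 x]_(i <- r) F i x).
Proof.
move=> mf0 mF; elim: r => [|i r IHr].
  by move: mf0; apply/eq_measurable_fun => x _; rewrite big_nil.
move: (measurable_maxr (mF i) IHr); apply/eq_measurable_fun => x _.
by rewrite big_cons.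
Qed.

Lemma measurable_pattern_fiber (I : finType) (b : I -> X -> bool) (U : Type)
    (g : {ffun I -> bool} -> U) (u : U) :
  (forall i, measurable [set x | b i x]) ->
  measurable [set x | g [ffun i => b i x] = u].
Proof.
move=> mb.
have -> : [set x | g [ffun i => b i x] = u] =
    \bigcup_(t in [set t | g t = u]) \bigcap_(i in [set: I]) [set x | b i x = t i].
  apply/seteqP; split => x /=.
    by move=> gx; exists [ffun i => b i x] => // i _; rewrite ffunE.
  move=> [t gt bt]; suff -> : [ffun i => b i x] = t by [].
  by apply/ffunP => i; rewrite ffunE; exact: bt.
apply: fin_bigcup_measurable => [|t _]; first exact: finite_finset.
apply: fin_bigcap_measurable => [|i _]; first exact: finite_finset.
case: (t i); first exact: mb.
rewrite (_ : [set x | b i x = false] = ~` [set x | b i x]); first exact: measurableC.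
by apply/seteqP; split => x /=; [move=> -> | move/negP/negbTE].
Qed.

Lemma measurable_fun_select (T : finType) (v : X -> T) (f : T -> X -> R) :
  (forall t, measurable [set x | v x = t]) -> (forall t, measurable_fun setT (f t)) ->
  measurable_fun setT (fun x => f (v x) x).
Proof.
move=> mv mf.
have -> : (fun x => f (v x) x) =
    (fun x => \sum_(t <- enum T) \1_[set y | v y = t] x * f t x).
  apply/funext => x; rewrite (bigD1_seq (v x)) ?mem_enum ?enum_uniq //=.
  rewrite indicE mem_set // mul1r big1_seq ?addr0 // => t /andP[tv _].
  by rewrite indicE memNset ?mul0r //= => vt; rewrite vt eqxx in tv.
by apply: measurable_sum => t; apply: measurable_funM => //; exact: measurable_indic.
Qed.

End MeasurableFinite.

Section Integration.
Context {d : measure_display} {X : measurableType d} {R : realType}.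

Lemma bounded_integrable (mu : {finite_measure set X -> \bar R}) (f : X -> R) M :
  measurable_fun setT f -> (forall x, `|f x| <= M) -> mu.-integrable setT (EFin \o f).
Proof.
move=> mf f_le; apply: measurable_bounded_integrable => //.
  by apply: fin_num_fun_lty; exact: fin_num_measure.
rewrite /bounded_near; near=> M' => x _; apply: le_trans (f_le x) _.
by near: M'; apply: nbhs_pinfty_ge; exact: num_real.
Unshelve. all: end_near. Qed.

Lemma integralBZl_EFin (mu : {measure set X -> \bar R}) (f g : X -> R) (c : R) :
  mu.-integrable setT (EFin \o f) -> mu.-integrable setT (EFin \o g) ->
  (\int[mu]_x (f x - c * g x)%:E =
     \int[mu]_x (f x)%:E - c%:E * \int[mu]_x (g x)%:E)%E.
Proof.
move=> intf intg.
have intcg : mu.-integrable setT (EFin \o (fun x => c * g x)).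
  exact: eq_integrable (integrableZl measurableT c intg).
under eq_integral do rewrite EFinB.
rewrite integralB_EFin //; congr (_ - _)%E.
by under eq_integral do rewrite EFinM; rewrite integralZl.
Qed.

Lemma cvg_integral_near_eq (mu : {finite_measure set X -> \bar R})
    (F : nat -> X -> R) (f : X -> R) M :
  (forall m, measurable_fun setT (F m)) -> measurable_fun setT f ->
  (forall m x, `|F m x| <= M) ->
  (\forall x \ae mu, \forall m \near \oo, F m x = f x) ->
  (fun m => \int[mu]_x (F m x)%:E)%E @ \oo --> (\int[mu]_x (f x)%:E)%E.
Proof.
move=> mF mf F_le F_ae.
have intM : mu.-integrable setT (EFin \o cst M).
  exact: (bounded_integrable _ _ `|M|).
have [] := @dominated_convergence _ _ _ mu setT measurableT
  (fun m x => (F m x)%:E) (fun x => (f x)%:E) (EFin \o cst M).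
- by move=> m; apply/measurable_EFinP; exact: mF.
- exact/measurable_EFinP.
- apply: filterS F_ae => x Fx _; apply: cvg_near_cst.
  by apply: filterS Fx => m ->.
- exact: intM.
- by apply: aeW => x m _ /=; rewrite lee_fin.
- by [].
Qed.

Lemma integral_lt0 (mu : {measure set X -> \bar R}) (f : X -> R) :
  measurable_fun setT f -> (forall x, f x <= 0) ->
  (0 < mu [set x | (f x < 0)%R])%E -> (\int[mu]_x (f x)%:E < 0)%E.
Proof.
move=> mf f_le0 f_lt0; rewrite ltNge; apply/negP => int_ge0.
have int_abs : (\int[mu]_x (f x)%:E = - \int[mu]_x `|(f x)%:E|)%E.
  rewrite -integral_ge0N //; apply: eq_integral => x _.
  by rewrite lee0_abs ?oppeK // lee_fin.
have mEf : measurable_fun setT (EFin \o f) by exact/measurable_EFinP.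
have /(ae_eq_integral_abs mu measurableT mEf) [N [mN N0 fN]] :
    (\int[mu]_x `|(f x)%:E| = 0)%E.
  by apply/le_anti; rewrite integral_ge0 // andbT -leeN2 oppe0 -int_abs.
have : mu [set x | f x < 0] = 0%E.
  apply: (subset_measure0 _ mN) N0; first exact: measurable_set_ltr.
  by move=> x /= fx; apply: fN => /(_ I) [] /eqP; rewrite lt_eqF.
by move=> f0; rewrite f0 ltxx in f_lt0.
Qed.

Lemma ae_neq_of_null (mu : {measure set X -> \bar R}) (f : X -> R) t :
  measurable_fun setT f -> mu [set x | f x = t] = 0%E -> \forall x \ae mu, f x != t.
Proof.
move=> mf f_t; exists [set x | f x = t]; split => //; first exact: measurable_set_eqr.
by move=> x /= /negP; rewrite negbK => /eqP.
Qed.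

Lemma ae_forall_neq (mu : {measure set X -> \bar R}) (I : finType)
    (P : I -> I -> X -> Prop) :
  (forall i j, i != j -> \forall x \ae mu, P i j x) ->
  \forall x \ae mu, forall i j, i != j -> P i j x.
Proof.
move=> P_ae.
have : \forall x \ae mu, forall ij : I * I, ij.1 != ij.2 -> P ij.1 ij.2 x.
  apply: filter_forall => -[i j] /=; have [->|ij] := eqVneq i j.
    exact: aeW.
  by apply: filterS (P_ae i j ij) => x.
by apply: filterS => x Px i j; exact: (Px (i, j)).
Qed.

End Integration.

Section RealLimits.
Context {R : realType}.

Lemma near_sign_cvg {T : Type} {F : set_system T} {FF : Filter F} {f : T -> R} {l : R} :
  f @ F --> l -> l != 0 -> \forall t \near F, (0 <= f t) = (0 <= l).
Proof.
move=> fl; case: (ltgtP 0 l) => // [l_gt0 | l_lt0] _.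
  by apply: filterS (cvgr_gt _ fl _ l_gt0) => t /ltW.
by apply: filterS (cvgr_lt _ fl _ l_lt0) => t; rewrite leNgt => ->.
Qed.

Lemma near_infty_affine_gt0 (a b : R) : 0 < b -> \forall m \near \oo, 0 < a + m%:R * b.
Proof.
move=> b_gt0; apply: filterS (nbhs_infty_gtr (- a / b)) => m.
by rewrite ltr_pdivrMr // => ?; lra.
Qed.

Lemma harmonic_le1 j : harmonic j <= 1 :> R.
Proof. by rewrite /= invf_le1 ?ler1n. Qed.

(* The infimum of the feasible multipliers is attained by continuity, and
   slackness holds there because [g > 0] on [0, inf). *)
Lemma min_feasible_multiplier (g : R -> \bar R) :
  (forall mu0 : R, 0 <= mu0 -> forall u : nat -> R,
     u m @[m --> \oo] --> mu0 -> g (u m) @[m --> \oo] --> g mu0) ->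
  (exists2 mu, 0 <= mu & (g mu <= 0)%E) ->
  exists ms, [/\ 0 <= ms, (g ms <= 0)%E,
    (forall mu, 0 <= mu -> (g mu <= 0)%E -> ms <= mu) & ms = 0 \/ g ms = 0].
Proof.
move=> g_cont [mu0 mu0_ge0 g_mu0].
pose S := [set mu | 0 <= mu /\ (g mu <= 0)%E].
have S_lb : has_lbound S by exists 0 => mu [].
have S_inf : has_inf S by split; first exists mu0.
have ms_ge0 : 0 <= inf S by apply: lb_le_inf; [exists mu0 | move=> mu []].
have ms_min mu : 0 <= mu -> (g mu <= 0)%E -> inf S <= mu.
  by move=> mu_ge0 g_mu; exact: ge_inf.
have g_ms : (g (inf S) <= 0)%E.
  have /choice [s s_inf] j : exists s, S s /\ s < inf S + harmonic j.
    by have [s] := inf_adherent (harmonic_gt0 j) S_inf; exists s.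
  have s_cvg : s @ \oo --> inf S.
    apply: (@squeeze_cvgr _ _ _ _ (cst (inf S)) (fun j => inf S + harmonic j)).
    - apply: nearW => j; have [Ss /ltW ->] := s_inf j.
      by rewrite andbT; exact: ge_inf.
    - exact: cvg_cst.
    - rewrite -[X in _ --> X]addr0.
      by apply: cvgD; [exact: cvg_cst | exact: cvg_harmonic].
  apply: (closed_cvg _ (@closed_ereal_ge_ereal R 0%E) _ _ (g_cont _ ms_ge0 _ s_cvg)).
  by apply: nearW => j; have [[]] := s_inf j.
exists (inf S); split => //.
have [->|ms_neq0] := eqVneq (inf S) 0; [by left | right].
have ms_gt0 : 0 < inf S by rewrite lt0r ms_neq0.
pose t j := inf S - inf S * harmonic j.
have t_cvg : t @ \oo --> inf S.
  rewrite -[X in _ --> X]subr0 -[X in _ - X](mulr0 (inf S)).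
  by apply: cvgB; [exact: cvg_cst | apply: cvgMl_tmp; exact: cvg_harmonic].
have g_t j : (0 < g (t j))%E.
  have t_ge0 : 0 <= t j.
    by rewrite subr_ge0 ler_piMr // harmonic_le1.
  rewrite ltNge; apply/negP => /(ms_min _ t_ge0).
  by have := mulr_gt0 ms_gt0 (harmonic_gt0 j); rewrite /t; lra.
apply/le_anti; rewrite g_ms.
apply: (closed_cvg _ (@closed_ereal_le_ereal R 0%E) _ _ (g_cont _ ms_ge0 _ t_cvg)).
by apply: nearW => j; exact: ltW (g_t j).
Qed.

End RealLimits.

Section Model.
Context {R : realType} {dX dY : measure_display} {X : measurableType dX}
  {Y : measurableType dY}.
Variables (PX : probability X R) (k : R.-pker X ~> Y) (n : nat)
  (Is : 'I_n.+1 -> set Y) (w : 'I_n.+1 -> R) (B alpha : R).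
Hypotheses (alpha01 : 0 < alpha < 1) (mIs : forall i, measurable (Is i))
  (w_bound : forall i, 0 < w i < B).

Local Notation p i x := (pC k (Is i) x).
Local Notation ell x i mu := (ell k Is w alpha x i mu).
Local Notation Dm mu := (Dmu k Is w alpha mu).
Local Notation Cm mu := (Cmu k Is w alpha mu).
Local Notation Gm mu := (G PX k Is alpha (Dm mu) (Cm mu)).

Lemma pC_ge0_le1 i x : 0 <= p i x <= 1.
Proof.
have p_ge0 : (0 <= k x (Is i))%E := measure_ge0 _ _.
have p_le1 : (k x (Is i) <= 1)%E.
  by rewrite -(@prob_kernel _ _ _ _ _ k x); apply: le_measure; rewrite ?inE.
rewrite /pC; move: p_ge0 p_le1.
by case: (k x (Is i)) => [r||] //=; rewrite !lee_fin => -> ->.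
Qed.

Lemma measurable_pC i : measurable_fun setT (fun x => p i x).
Proof.
apply: (measurableT_comp (f := fine) (g := fun x => k x (Is i))) => //.
exact: measurable_kernel.
Qed.

Lemma measurable_ell i mu : measurable_fun setT (fun x => ell x i mu).
Proof.
by apply: measurable_funD; apply: measurable_funM => //;
  [exact: measurable_pC | apply: measurable_funB => //; exact: measurable_pC].
Qed.

Lemma ell_le_Cmu mu x j : ell x j mu <= ell x (Cm mu x) mu.
Proof.
rewrite /Cmu; case: pickP => [i /and3P[/forallP i_max _ _] | no_pick] //=.
have [i _ i_max] := bigmax_argmax (fun j => ell x j mu).
have max_i : is_maximizer k Is w alpha x mu i by apply/forallP.
have [i' i'_sel] :=
  exists_lex_max (is_maximizer k Is w alpha x mu) w (ex_intro _ i max_i).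
by rewrite no_pick in i'_sel.
Qed.

Lemma Ux_ell_Cmu mu x : Ux k Is w alpha x mu = ell x (Cm mu x) mu.
Proof.
rewrite /Ux; have [i -> i_max] := bigmax_argmax (fun j => ell x j mu).
by apply/le_anti; rewrite ell_le_Cmu i_max.
Qed.

Lemma Cmu_strict_max mu x i :
  (forall j, j != i -> ell x j mu < ell x i mu) -> Cm mu x = i.
Proof.
move=> i_max; apply/eqP; apply: contraT => /i_max.
by rewrite ltNge ell_le_Cmu.
Qed.

(* The tie-broken choice of [Cmu], read off the table [t (j, i) = (ell j <= ell i)]. *)
Definition lex_select (t : {ffun 'I_n.+1 * 'I_n.+1 -> bool}) : 'I_n.+1 :=
  odflt ord0 [pick i | [&& [forall j, t (j, i)],
     [forall j, [forall j', t (j', j)] ==> (w j <= w i)] &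
     [forall j, ([forall j', t (j', j)] && (w j == w i)) ==> (i <= j)%N]]].

Lemma Cmu_lex_select mu x :
  Cm mu x = lex_select [ffun ij => ell x ij.1 mu <= ell x ij.2 mu].
Proof.
rewrite /Cmu /lex_select.
have -> : is_maximizer k Is w alpha x mu =
    fun i => [forall j, [ffun ij => ell x ij.1 mu <= ell x ij.2 mu] (j, i)].
  by apply/funext => i; apply: eq_forallb => j; rewrite ffunE.
by [].
Qed.

Lemma measurable_rule_mu mu : measurable_rule (Dm mu) (Cm mu).
Proof.
split.
  apply: (measurable_set_ler (cst 0)) => //.
  by apply: measurable_bigmaxr => [|i]; exact: measurable_ell.
move=> i; rewrite (_ : _ @^-1` _ = [set x | lex_select
    [ffun ij => (fun ij x => ell x ij.1 mu <= ell x ij.2 mu) ij x] = i]).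
  by apply: measurable_pattern_fiber => ij; apply: measurable_set_ler;
    exact: measurable_ell.
by apply/seteqP; split => x /=; rewrite Cmu_lex_select.
Qed.

Definition G_integrand (D : X -> bool) (C : X -> 'I_n.+1) x : R :=
  (1 - p (C x) x - alpha) * (D x)%:R.

Definition Pi_integrand (D : X -> bool) (C : X -> 'I_n.+1) x : R :=
  w (C x) * p (C x) x * (D x)%:R.

Lemma measurable_rule_fiber (D : X -> bool) (C : X -> 'I_n.+1) :
  measurable_rule D C -> forall t, measurable [set x | (C x, D x) = t].
Proof.
move=> [mD mC] [i b].
have -> : [set x | (C x, D x) = (i, b)] = [set x | C x = i] `&` [set x | D x = b].
  by apply/seteqP; split => x /=; [case=> -> -> | case=> -> ->].
apply: measurableI; first exact: mC.
case: b; first exact: mD.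
rewrite (_ : [set x | D x = false] = ~` (D @^-1` [set true])); first exact: measurableC.
by apply/seteqP; split => x /=; [move=> -> | move/negP/negbTE].
Qed.

Lemma measurable_G_integrand D C : measurable_rule D C ->
  measurable_fun setT (G_integrand D C).
Proof.
move=> /measurable_rule_fiber mDC.
have mf (t : 'I_n.+1 * bool) :
    measurable_fun setT (fun x => (1 - p t.1 x - alpha) * (t.2)%:R).
  apply: measurable_funM => //.
  by do 2 apply: measurable_funB => //; exact: measurable_pC.
exact: (measurable_fun_select _ (fun x => (C x, D x)) _ mDC mf).
Qed.

Lemma measurable_Pi_integrand D C : measurable_rule D C ->
  measurable_fun setT (Pi_integrand D C).
Proof.
move=> /measurable_rule_fiber mDC.
have mf (t : 'I_n.+1 * bool) : measurable_fun setT (fun x => w t.1 * p t.1 x * (t.2)%:R).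
  by apply: measurable_funM => //; apply: measurable_funM => //; exact: measurable_pC.
exact: (measurable_fun_select _ (fun x => (C x, D x)) _ mDC mf).
Qed.

Lemma G_integrand_le1 D C x : `|G_integrand D C x| <= 1.
Proof.
rewrite /G_integrand; case: (D x); rewrite ?mulr1 ?mulr0 ?normr0 //.
have /andP[p_ge0 p_le1] := pC_ge0_le1 (C x) x; have /andP[a_gt0 a_lt1] := alpha01.
by rewrite ler_norml; apply/andP; split; lra.
Qed.

Lemma Pi_integrand_leB D C x : `|Pi_integrand D C x| <= B.
Proof.
have /andP[w_gt0 w_ltB] := w_bound (C x).
rewrite /Pi_integrand; case: (D x); last by rewrite mulr0 normr0; lra.
have /andP[p_ge0 p_le1] := pC_ge0_le1 (C x) x.
by rewrite mulr1 ger0_norm ?mulr_ge0 //; [nra | lra].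
Qed.

Lemma integrable_G_integrand D C : measurable_rule D C ->
  PX.-integrable setT (EFin \o G_integrand D C).
Proof.
move=> /measurable_G_integrand mG.
exact: (bounded_integrable _ _ _ mG (G_integrand_le1 D C)).
Qed.

Lemma integrable_Pi_integrand D C : measurable_rule D C ->
  PX.-integrable setT (EFin \o Pi_integrand D C).
Proof.
move=> /measurable_Pi_integrand mPi.
exact: (bounded_integrable _ _ _ mPi (Pi_integrand_leB D C)).
Qed.

(* [D^mu, C^mu] attains [max(0, U_x(mu))], the pointwise maximum of [ell_{x,C}(mu) D]. *)
Lemma lagrangian_integrand_le D C mu x :
  Pi_integrand D C x - mu * G_integrand D C x <=
  Pi_integrand (Dm mu) (Cm mu) x - mu * G_integrand (Dm mu) (Cm mu) x.
Proof.
have lagr D' C' : Pi_integrand D' C' x - mu * G_integrand D' C' x =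
    ell x (C' x) mu * (D' x)%:R.
  by rewrite /Pi_integrand /G_integrand /Defs.ell; ring.
rewrite !lagr /Dmu Ux_ell_Cmu.
have := ell_le_Cmu mu x (C x).
set u := ell x (Cm mu x) mu; case: (D x); case: (lerP 0 u) => u0 /=; lra.
Qed.

Lemma integrable_lagrangian D C mu : measurable_rule D C ->
  PX.-integrable setT (EFin \o (fun x => Pi_integrand D C x - mu * G_integrand D C x)).
Proof.
move=> mDC; apply: (bounded_integrable _ _ (B + `|mu|)).
  by apply: measurable_funB; [exact: measurable_Pi_integrand |
    apply: measurable_funM => //; exact: measurable_G_integrand].
move=> x; apply: le_trans (ler_normB _ _) _; apply: lerD; first exact: Pi_integrand_leB.
by rewrite normrM -[leRHS]mulr1 ler_wpM2l // G_integrand_le1.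
Qed.

Lemma lagrangian_le D C mu : measurable_rule D C ->
  (Pi PX k Is w D C - mu%:E * G PX k Is alpha D C <=
   Pi PX k Is w (Dm mu) (Cm mu) - mu%:E * Gm mu)%E.
Proof.
move=> mDC; have mDCmu := measurable_rule_mu mu.
rewrite /Pi /G -!integralBZl_EFin;
  try (exact: integrable_Pi_integrand || exact: integrable_G_integrand).
apply: le_integral => //; try exact: integrable_lagrangian.
by move=> x _; rewrite lee_fin lagrangian_integrand_le.
Qed.

Lemma G_fin_num D C : measurable_rule D C -> G PX k Is alpha D C \is a fin_num.
Proof.
by move=> mDC; apply: integrable_fin_num => //; exact: integrable_G_integrand.
Qed.

Lemma Pi_fin_num D C : measurable_rule D C -> Pi PX k Is w D C \is a fin_num.
Proof.
by move=> mDC; apply: integrable_fin_num => //; exact: integrable_Pi_integrand.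
Qed.

Lemma Pi_le_Pi_mu D C mu : 0 <= mu -> measurable_rule D C ->
  (G PX k Is alpha D C <= 0)%E -> mu = 0 \/ Gm mu = 0%E ->
  (Pi PX k Is w D C <= Pi PX k Is w (Dm mu) (Cm mu))%E.
Proof.
move=> mu_ge0 mDC; have mDCmu := measurable_rule_mu mu.
move: (lagrangian_le D C mu mDC).
rewrite -(fineK (Pi_fin_num _ _ mDC)) -(fineK (G_fin_num _ _ mDC)).
rewrite -(fineK (Pi_fin_num _ _ mDCmu)) -(fineK (G_fin_num _ _ mDCmu)).
rewrite -!EFinM -!EFinB !lee_fin => lagr G_le0 [mu0 | /eqP].
  by move: lagr; rewrite mu0; lra.
by rewrite eqe => /eqP G0; move: lagr; rewrite G0; nra.
Qed.

Hypotheses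
  (p_nonatomic : forall i (t : R), PX [set x | p i x = t] = 0%E)
  (p_pair_nonatomic : forall i j, i != j -> forall (a b t : R), (a, b) != (0, 0) ->
     PX [set x | a * p i x + b * p j x = t] = 0%E).

Definition generic_at mu x :=
  (forall i j, i != j -> ell x i mu != ell x j mu) /\ (forall i, ell x i mu != 0).

Definition generic_infty x :=
  (forall i j, i != j -> p i x != p j x) /\ (forall i, p i x != 1 - alpha).

Lemma ae_p_pair_neq i j (a b t : R) : i != j -> (a, b) != (0, 0) ->
  \forall x \ae PX, a * p i x + b * p j x != t.
Proof.
move=> ij ab; apply: (ae_neq_of_null PX (fun x => a * p i x + b * p j x) t).
  by apply: measurable_funD; apply: measurable_funM => //; exact: measurable_pC.
exact: p_pair_nonatomic.
Qed.

Lemma ae_generic_at mu : 0 <= mu -> \forall x \ae PX, generic_at mu x.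
Proof.
move=> mu_ge0.
have wmu_neq0 i : w i + mu != 0.
  by have /andP[w_gt0 _] := w_bound i; rewrite gt_eqF ?ltr_wpDr.
have ell_neq : \forall x \ae PX, forall i j, i != j -> ell x i mu != ell x j mu.
  apply: ae_forall_neq => i j ij.
  have ab : (w i + mu, - (w j + mu)) != (0, 0) by rewrite xpair_eqE negb_and wmu_neq0.
  apply: filterS (ae_p_pair_neq _ _ _ _ 0 ij ab) => x; apply: contra => /eqP ell_eq.
  by apply/eqP; move: ell_eq; rewrite /Defs.ell; lra.
have ell_neq0 : \forall x \ae PX, forall i, ell x i mu != 0.
  apply: filter_forall => i.
  have := ae_neq_of_null PX _ (mu * (1 - alpha) / (w i + mu))
    (measurable_pC i) (p_nonatomic _ _).
  apply: filterS => x; apply: contra => /eqP ell0; apply/eqP.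
  rewrite -(mulfK (wmu_neq0 i) (p i x)); congr (_ / _).
  by move: ell0; rewrite /Defs.ell; lra.
by apply: filterS2 ell_neq ell_neq0 => x.
Qed.

Lemma ae_generic_infty : \forall x \ae PX, generic_infty x.
Proof.
have p_neq : \forall x \ae PX, forall i j, i != j -> p i x != p j x.
  apply: ae_forall_neq => i j ij.
  have ab : ((1 : R), (-1 : R)) != (0, 0) by rewrite xpair_eqE oner_eq0.
  apply: filterS (ae_p_pair_neq _ _ _ _ 0 ij ab) => x; apply: contra => /eqP p_eq.
  by apply/eqP; lra.
have p_neq1 : \forall x \ae PX, forall i, p i x != 1 - alpha.
  apply: filter_forall => i.
  exact: (ae_neq_of_null PX _ _ (measurable_pC i) (p_nonatomic _ _)).
by apply: filterS2 p_neq p_neq1 => x.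
Qed.

Lemma G_integrand_strict_max mu x i :
  (forall j, j != i -> ell x j mu < ell x i mu) ->
  G_integrand (Dm mu) (Cm mu) x = (1 - p i x - alpha) * (0 <= ell x i mu)%R%:R.
Proof.
by move=> i_max; rewrite /G_integrand /Dmu Ux_ell_Cmu (Cmu_strict_max _ _ _ i_max).
Qed.

Lemma ell_cvg x i (u : nat -> R) mu0 :
  u m @[m --> \oo] --> mu0 -> ell x i (u m) @[m --> \oo] --> ell x i mu0.
Proof. by move=> u_cvg; apply: cvgD; [exact: cvg_cst | exact: cvgMr_tmp]. Qed.

Lemma near_G_integrand mu0 (u : nat -> R) x : generic_at mu0 x ->
  u m @[m --> \oo] --> mu0 ->
  \forall m \near \oo,
    G_integrand (Dm (u m)) (Cm (u m)) x = G_integrand (Dm mu0) (Cm mu0) x.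
Proof.
move=> [ell_neq ell_neq0] u_cvg; set i := Cm mu0 x.
have i_max j : j != i -> ell x j mu0 < ell x i mu0.
  by move=> ji; rewrite lt_neqAle ell_neq // ell_le_Cmu.
have near_max : \forall m \near \oo, forall j, j != i -> ell x j (u m) < ell x i (u m).
  apply: filter_forall => j; have [_ | ji] := eqVneq j i; first exact: nearW.
  have ell_ij : ell x i (u m) - ell x j (u m) @[m --> \oo] --> ell x i mu0 - ell x j mu0.
    by apply: cvgB; exact: ell_cvg.
  have : \forall m \near \oo, 0 < ell x i (u m) - ell x j (u m).
    by apply: (cvgr_gt _ ell_ij); rewrite subr_gt0 i_max.
  by apply: filterS => m; rewrite subr_gt0.
have near_sign : \forall m \near \oo, (0 <= ell x i (u m)) = (0 <= ell x i mu0).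
  exact: near_sign_cvg (ell_cvg x i _ _ u_cvg) (ell_neq0 i).
apply: filterS2 near_max near_sign => m m_max m_sign.
rewrite (G_integrand_strict_max _ _ _ m_max) m_sign.
by rewrite -(G_integrand_strict_max _ _ _ i_max).
Qed.

Lemma G_mu_cvg (mu0 : R) : 0 <= mu0 ->
  forall u : nat -> R, u m @[m --> \oo] --> mu0 -> Gm (u m) @[m --> \oo] --> Gm mu0.
Proof.
move=> mu0_ge0 u u_cvg; apply: (cvg_integral_near_eq _ _ _ 1).
- by move=> m; apply: measurable_G_integrand; exact: measurable_rule_mu.
- by apply: measurable_G_integrand; exact: measurable_rule_mu.
- by move=> m x; exact: G_integrand_le1.
- by have := ae_generic_at _ mu0_ge0; apply: filterS => x gx; exact: near_G_integrand.
Qed.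

Definition G_integrand_infty x := Num.min 0 (1 - alpha - Tmax k Is x).

Lemma measurable_G_integrand_infty : measurable_fun setT G_integrand_infty.
Proof.
apply: measurable_minr => //; apply: measurable_funB => //.
by apply: measurable_bigmaxr => [|i]; exact: measurable_pC.
Qed.

(* For large [mu], [ell_{x,C}(mu) ~ mu (p_C(x) - (1 - alpha))]: [C^mu(x)] is the
   argmax of [p_.(x)] and [D^mu(x) = 1{T(x) > 1 - alpha}]. *)
Lemma near_G_integrand_infty x : generic_infty x ->
  \forall m \near \oo, G_integrand (Dm m%:R) (Cm m%:R) x = G_integrand_infty x.
Proof.
move=> [p_neq p_neq1]; have [i T_pi i_max] := bigmax_argmax (fun j => p j x).
have near_max : \forall m \near \oo, forall j, j != i -> ell x j m%:R < ell x i m%:R.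
  apply: filter_forall => j; have [_ | ji] := eqVneq j i; first exact: nearW.
  have pji : 0 < p i x - p j x by rewrite subr_gt0 lt_neqAle p_neq ?i_max.
  apply: filterS (near_infty_affine_gt0 (w i * p i x - w j * p j x) _ pji) => m.
  by rewrite /Defs.ell; lra.
have near_sign : \forall m \near \oo, (0 <= ell x i m%:R) = (1 - alpha < p i x).
  case: (ltgtP (1 - alpha) (p i x)) => [p_gt | p_lt | p_eq].
  - have p_gt' : 0 < p i x - (1 - alpha) by rewrite subr_gt0.
    apply: filterS (near_infty_affine_gt0 (w i * p i x) _ p_gt') => m.
    by rewrite /Defs.ell => /ltW.
  - have p_lt' : 0 < 1 - alpha - p i x by rewrite subr_gt0.
    apply: filterS (near_infty_affine_gt0 (- (w i * p i x)) _ p_lt') => m.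
    by rewrite /Defs.ell leNgt => ?; apply/negbTE; rewrite negbK; lra.
  - by move: (p_neq1 i); rewrite p_eq eqxx.
apply: filterS2 near_max near_sign => m m_max m_sign.
rewrite (G_integrand_strict_max _ _ _ m_max) m_sign /G_integrand_infty /Tmax T_pi.
by case: ltrP => p_i; rewrite ?mulr1 ?mulr0; [rewrite min_r | rewrite min_l]; lra.
Qed.

Lemma G_mu_cvg_infty :
  Gm m%:R @[m --> \oo] --> (\int[PX]_x (G_integrand_infty x)%:E)%E.
Proof.
apply: (cvg_integral_near_eq _ _ _ 1).
- by move=> m; apply: measurable_G_integrand; exact: measurable_rule_mu.
- exact: measurable_G_integrand_infty.
- by move=> m x; exact: G_integrand_le1.
- by have := ae_generic_infty; apply: filterS => x gx; exact: near_G_integrand_infty.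
Qed.

Hypothesis T_pos : (0 < PX [set x | (1 - alpha < Tmax k Is x)%R])%E.

Lemma integral_G_integrand_infty_lt0 : (\int[PX]_x (G_integrand_infty x)%:E < 0)%E.
Proof.
apply: integral_lt0 => [|x|]; first exact: measurable_G_integrand_infty.
  by rewrite ge_min lexx.
rewrite (_ : [set x | _] = [set x | (1 - alpha < Tmax k Is x)%R]) //.
by apply/seteqP; split => x /=; rewrite gt_min ltxx subr_lt0.
Qed.

Lemma exists_feasible_multiplier : exists2 mu, 0 <= mu & (Gm mu <= 0)%E.
Proof.
apply: contrapT => no_feasible.
have G_gt0 (m : nat) : (0 < Gm m%:R)%E.
  by rewrite ltNge; apply/negP => G_le0; apply: no_feasible; exists m%:R.
have : (0 <= \int[PX]_x (G_integrand_infty x)%:E)%E.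
  apply: (closed_cvg _ (@closed_ereal_le_ereal R 0%E) _ _ G_mu_cvg_infty).
  by apply: nearW => m; exact: ltW (G_gt0 m).
by rewrite leNgt integral_G_integrand_infty_lt0.
Qed.

End Model.

Theorem theorem1 (R : realType) (dX dY : measure_display)
  (X : measurableType dX) (Y : measurableType dY)
  (PXY : probability (X * Y)%type R) (PX : probability X R)
  (k : R.-pker X ~> Y)
  (n : nat) (Is : 'I_n.+1 -> set Y) (w : 'I_n.+1 -> R) (B alpha : R) :
  (* P_XY is the joint law: X ~ PX and k is the conditional law of Y given X *)
  (forall (A : set X) (E : set Y), measurable A -> measurable E ->
     PXY (A `*` E) = (\int[PX]_(x in A) k x E)%E) ->
  0 < alpha < 1 ->
  (forall i, measurable (Is i)) ->
  injective Is ->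
  (forall i, 0 < w i < B) ->
  (0 < PX [set x | (1 - alpha < Tmax k Is x)%R])%E ->
  nonatomic PX ->
  (forall i (t : R), PX [set x | pC k (Is i) x = t] = 0%E) ->
  (forall i j, i != j -> forall (a b t : R), (a, b) != (0, 0) ->
     PX [set x | a * pC k (Is i) x + b * pC k (Is j) x = t] = 0%E) ->
  exists mustar : R,
    [/\ (* (1) mustar = min {mu >= 0 : G(D^mu, C^mu) <= 0} exists *)
        0 <= mustar,
        (G PX k Is alpha (Dmu k Is w alpha mustar) (Cmu k Is w alpha mustar)
           <= 0)%E,
        (forall mu, 0 <= mu ->
           (G PX k Is alpha (Dmu k Is w alpha mu) (Cmu k Is w alpha mu)
              <= 0)%E -> mustar <= mu),
        (* (2) the pair (D^mustar, C^mustar) is a feasible, optimal solution *)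
        measurable_rule (Dmu k Is w alpha mustar) (Cmu k Is w alpha mustar) &
        (forall (D : X -> bool) (C : X -> 'I_n.+1),
           measurable_rule D C -> (G PX k Is alpha D C <= 0)%E ->
           (Pi PX k Is w D C <=
              Pi PX k Is w (Dmu k Is w alpha mustar) (Cmu k Is w alpha mustar))%E)].
Proof.
move=> _ alpha01 mIs _ w_bound T_pos _ p_nonatomic p_pair_nonatomic.
have G_cont := G_mu_cvg _ _ _ _ _ _ _ alpha01 mIs w_bound p_nonatomic p_pair_nonatomic.
have feasible :=
  exists_feasible_multiplier _ _ _ _ w _ alpha01 mIs p_nonatomic p_pair_nonatomic T_pos.
have [ms [ms_ge0 G_ms ms_min slack]] := min_feasible_multiplier _ G_cont feasible.
exists ms; split => //; first exact: measurable_rule_mu.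
move=> D C mDC G_le0.
exact: Pi_le_Pi_mu alpha01 mIs w_bound _ _ _ ms_ge0 mDC G_le0 slack.
Qed.
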